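(* Let $\mathbb{K}$ be a field and $s\geq 3$ an integer. Let $f=\sum_{i=0}^n a_ix_s^i\in\mathbb{K}[x_1,\ldots,x_s]$ with $n\geq 2$, $a_0,\ldots,a_n\in\mathbb{K}[x_1,\ldots,x_{s-1}]$, $a_0a_n\neq 0$. Assume that $f$ has no nonconstant factor in $\mathbb{K}[x_1,\ldots,x_{s-1}]$. If there exists an index $j$ with $0\leq j\leq n-1$ such that $$\deg_{s-1}a_j>\max_{i\neq j}\{\deg_{s-1}a_i+(j-i)\deg_{s-1}a_n\},$$ then $f$ is a product of at most $n-j$ irreducible polynomials over $\mathbb{K}[x_1,\ldots,x_{s-1}]$. In particular, if $j=n-1$, then $f$ is irreducible over $\mathbb{K}[x_1,\ldots,x_{s-1}]$.
   Context: For a polynomial $g\in\mathbb{K}[x_1,\ldots,x_r]$, $\deg_r g$ denotes the degree of $g$ viewed as a polynomial in $x_r$ with coefficients in $\mathbb{K}[x_1,\ldots,x_{r-1}]$. $f$ is regarded as a polynomial in $x_s$ with coefficients in $\mathbb{K}[x_1,\ldots,x_{s-1}]$, and ''a product of at most $k$ irreducible polynomials over $\mathbb{K}[x_1,\ldots,x_{s-1}]$'' means that its factorization into irreducibles of $\mathbb{K}[x_1,\ldots,x_{s-1}][x_s]$ has at most $k$ factors counted with multiplicities. *)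

From HB Require Import structures.
From mathcomp Require Import all_boot all_order all_algebra.
Set Implicit Arguments. Unset Strict Implicit. Unset Printing Implicit Defensive.
Import Order.TTheory GRing.Theory Num.Theory.
Local Open Scope ring_scope.

(* K[x_1,...,x_m] as iterated univariate polynomials:
   mpolyK K 0 = K,  mpolyK K m.+1 = (mpolyK K m)[x_{m+1}]. *)
Fixpoint mpolyK (K : fieldType) (m : nat) : idomainType :=
  if m is m'.+1 then ({poly mpolyK K m'} : idomainType) else (K : idomainType).

Fixpoint mconst (K : fieldType) (m : nat) : mpolyK K m -> bool :=
  match m return mpolyK K m -> bool with
  | 0 => fun _ => true
  | m'.+1 => fun p : {poly mpolyK K m'} => (size p <= 1)%N && mconst p`_0
  end.

Definition irreducible_elt (R : idomainType) (p : R) : Prop :=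
  [/\ p != 0, ~~ (p \is a GRing.unit) &
      forall q r : R, p = q * r -> q \is a GRing.unit \/ r \is a GRing.unit].

Definition degv (R : idomainType) (a : {poly R}) : nat := (size a).-1.

From HB Require Import structures.
From mathcomp Require Import all_boot all_order all_algebra.
From mathcomp Require Import zify.
From Stdlib Require Import Classical.
Import Order.TTheory GRing.Theory Num.Theory.
Set Implicit Arguments. Unset Strict Implicit. Unset Printing Implicit Defensive.
Local Open Scope ring_scope.

(* Write x = x_s, y = x_(s-1) and d = deg_y a_n.  The map
   g |-> y^(d deg_x g) g(x / y^d, y) is multiplicative, hence so is the leading
   coefficient in y of its image, the initial form of g (the part of g on the
   supporting line of slope d of its Newton polygon).  The degree hypothesis
   says that the initial form of f is a monomial c x^j, so the initial form of
   every factor g of f is a monomial as well, of degree k_g <= p = deg_x g.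
   If p >= 1 then k_g < p: otherwise the top y-degree D of the image of g is
   reached by the coefficient of x^p, so D <= deg_y (lead_coef g) <= d, but
   not by the coefficient g_0 y^(p d) of x^0, so p d < D.  Summing over a
   factorization of f into irreducible factors of positive x-degree gives
   j <= n - (number of factors). *)

Lemma coef_neq0_size (R : nzSemiRingType) (p : {poly R}) i :
  p`_i != 0 -> (i < size p)%N.
Proof. by apply: contraNT; rewrite -leqNgt => /(nth_default 0) ->. Qed.

Section LowestCoefficient.
Variable R : idomainType.
Implicit Types P Q : {poly R}.

Lemma lowest_coef P : P != 0 ->
  exists2 a, P`_a != 0 & forall i, (i < a)%N -> P`_i = 0.
Proof.
move=> P0; have exP : exists i, P`_i != 0.
  by exists (size P).-1; rewrite -lead_coefE lead_coef_eq0.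
case: (ex_minnP exP) => a Pa amin; exists a => // i ia.
by apply/eqP/negPn/negP => /amin; rewrite leqNgt ia.
Qed.

Lemma coefM_lowest P Q a b :
  (forall i, (i < a)%N -> P`_i = 0) -> (forall i, (i < b)%N -> Q`_i = 0) ->
  (P * Q)`_(a + b) = P`_a * Q`_b.
Proof.
move=> lowP lowQ; rewrite coefM.
rewrite (bigD1 (Ordinal (leq_addr b a : a < (a + b).+1)%N)) //=.
rewrite big1 ?addr0 ?addKn // => -[i /= ilt] /eqP ne_ia.
have [ia|ai|eia] := ltngtP i a; last by case: ne_ia; apply: val_inj.
  by rewrite lowP // mul0r.
by rewrite lowQ ?mulr0 //; lia.
Qed.

Lemma monomial_factor_low P Q c m : c != 0 -> P * Q = c *: 'X^m ->
  forall i, (i < (size P).-1)%N -> P`_i = 0.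
Proof.
move=> c0 PQm.
have monoPQ k : (P * Q)`_k != 0 -> k = m.
  by rewrite PQm coefZ coefXn; have [//|_] := eqVneq k m; rewrite mulr0 eqxx.
have PQ_m : (P * Q)`_m != 0 by rewrite PQm coefZ coefXn eqxx mulr1.
have /andP[P0 Q0] : (P != 0) && (Q != 0).
  by rewrite -negb_or -mulf_eq0; apply: contraNneq PQ_m => ->; rewrite coef0.
have [a Pa lowP] := lowest_coef P0; have [b Qb lowQ] := lowest_coef Q0.
have ab_m : (a + b)%N = m by apply: monoPQ; rewrite coefM_lowest // mulf_neq0.
have top_m : ((size P).-1 + (size Q).-1)%N = m.
  have [sP sQ] : (0 < size P)%N /\ (0 < size Q)%N by rewrite !size_poly_gt0.
  apply: monoPQ; have -> : ((size P).-1 + (size Q).-1)%N = (size (P * Q)).-1.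
    by rewrite size_mul //; lia.
  by rewrite -lead_coefE lead_coef_eq0 mulf_neq0.
have := coef_neq0_size Pa; have := coef_neq0_size Qb.
by move=> bQ aP i ilt; apply: lowP; lia.
Qed.

End LowestCoefficient.

Section InitialForm.
Variable R : idomainType.
Implicit Types u v f g h : {poly {poly R}}.

Definition lead_coefY u : {poly R} := lead_coef (swapXY u).

Lemma coef_lead_coefY u i : (lead_coefY u)`_i = u`_i`_(sizeY u).-1.
Proof. by rewrite /lead_coefY lead_coefE -sizeYE coef_swapXY. Qed.

Lemma lead_coefYM u v : lead_coefY (u * v) = lead_coefY u * lead_coefY v.
Proof. by rewrite /lead_coefY rmorphM lead_coefM. Qed.

Lemma lead_coefY1 : lead_coefY 1 = 1.
Proof. by rewrite /lead_coefY rmorph1 lead_coef1. Qed.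

Lemma lead_coefY_eq0 u : (lead_coefY u == 0) = (u == 0).
Proof. by rewrite lead_coef_eq0 swapXY_eq0. Qed.

Lemma size_lead_coefY u : (size (lead_coefY u) <= size u)%N.
Proof.
apply/leq_sizeP => i le_u_i.
by rewrite coef_lead_coefY (nth_default 0 le_u_i) coef0.
Qed.

Lemma lead_coefY_dominant u (j : nat) :
  (forall i, i != j -> (size (u`_i)%R < size (u`_j)%R)%N) ->
  lead_coefY u = lead_coef u`_j *: 'X^j.
Proof.
move=> dom; have sizeY_u : sizeY u = size u`_j.
  apply/anti_leq; rewrite max_size_coefXY andbT.
  by apply/bigmax_leqP => i _; have [->|/dom/ltnW] := eqVneq (i : nat) j.
apply/polyP => i; rewrite coef_lead_coefY coefZ coefXn sizeY_u.
have [->|ne_ij] := eqVneq i j; first by rewrite mulr1.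
by rewrite mulr0 nth_default // -ltnS (ltn_predK (dom i ne_ij)) dom.
Qed.

(* y^(d deg g) g(x / y^d, y), for x the outer and y the inner variable *)
Definition tilt (d : nat) g : {poly {poly R}} :=
  \poly_(i < size g) (g`_i * 'X^(((size g).-1 - i) * d)).

Definition initial d g : {poly R} := lead_coefY (tilt d g).

Lemma coef_tilt d g i : (tilt d g)`_i = g`_i * 'X^(((size g).-1 - i) * d).
Proof.
by rewrite coef_poly; case: ltnP => // le_g_i; rewrite nth_default ?mul0r.
Qed.

Lemma size_tilt d g : size (tilt d g) = size g.
Proof.
have [->|g0] := eqVneq g 0.
  by apply/eqP; rewrite /tilt size_poly0 -leqn0 size_poly.
by rewrite size_poly_eq // subnn mul0n expr0 mulr1 -lead_coefE lead_coef_eq0.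
Qed.

Lemma tilt_eq0 d g : (tilt d g == 0) = (g == 0).
Proof. by rewrite -!size_poly_eq0 size_tilt. Qed.

Lemma tilt1 d : tilt d 1 = 1.
Proof.
apply/polyP => -[|i]; rewrite coef_tilt size_poly1.
  by rewrite subnn mul0n expr0 mulr1.
by rewrite coef1 mul0r.
Qed.

Lemma tiltM d g h : tilt d (g * h) = tilt d g * tilt d h.
Proof.
have tilt0 : tilt d 0 = 0 by apply/eqP; rewrite tilt_eq0.
have [->|g0] := eqVneq g 0; first by rewrite !(mul0r, tilt0).
have [->|h0] := eqVneq h 0; first by rewrite !(mulr0, tilt0).
apply/polyP => k; rewrite coef_tilt size_mul // coefM big_distrl coefM.
apply: eq_bigr => -[i /=]; rewrite ltnS => le_ik _; rewrite !coef_tilt.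
have [->|gi0] := eqVneq g`_i 0; first by rewrite !mul0r.
have [->|hki0] := eqVneq h`_(k - i) 0; first by rewrite !(mulr0, mul0r).
have := coef_neq0_size gi0; have := coef_neq0_size hki0.
rewrite mulrACA -exprD -mulnDl => lt_hki lt_gi; congr (_ * _ ^+ (_ * d)).
by rewrite -!subn1; move: (size g) (size h) lt_gi lt_hki => a b; lia.
Qed.

Lemma initialM d g h : initial d (g * h) = initial d g * initial d h.
Proof. by rewrite /initial tiltM lead_coefYM. Qed.

Lemma initial_eq0 d g : (initial d g == 0) = (g == 0).
Proof. by rewrite lead_coefY_eq0 tilt_eq0. Qed.

Lemma size_initial d g : (size (initial d g) <= size g)%N.
Proof. by rewrite -(size_tilt d) size_lead_coefY. Qed.

Lemma initial_dominant g j (d := degv (lead_coef g)) : g`_j != 0 ->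
  (forall i, (i <= (size g).-1)%N -> i != j -> g`_i != 0 ->
     (degv g`_i)%:Z + (j%:Z - i%:Z) * d%:Z < (degv g`_j)%:Z) ->
  initial d g = lead_coef g`_j *: 'X^j.
Proof.
move=> gj0 dom; rewrite /initial (@lead_coefY_dominant _ j); last first.
  move=> i ne_ij; rewrite !coef_tilt [X in (_ < X)%N]size_mulXn //.
  have [->|gi0] := eqVneq g`_i 0.
    by rewrite mul0r size_poly0 addn_gt0 size_poly_gt0 gj0 orbT.
  have lt_gi := coef_neq0_size gi0; have lt_gj := coef_neq0_size gj0.
  have le_gi : (i <= (size g).-1)%N by rewrite -ltnS (ltn_predK lt_gi).
  have := dom i le_gi ne_ij gi0; rewrite size_mulXn // /degv.
  have := size_poly_gt0 g`_i; have := size_poly_gt0 g`_j; rewrite gi0 gj0.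
  move: (size g) (size g`_i) (size g`_j) lt_gi lt_gj => a b c; nia.
by rewrite coef_tilt lead_coefM lead_coefXn mulr1.
Qed.

Lemma size_initial_factor_lt d g h c j :
  (g * h)`_0 != 0 -> degv (lead_coef (g * h)) = d ->
  c != 0 -> initial d (g * h) = c *: 'X^j ->
  (1 < size g)%N -> (size (initial d g) < size g)%N.
Proof.
move=> gh00 deg_gh c0 init_gh sg.
have /andP[g00 h00] : (g`_0 != 0) && (h`_0 != 0).
  by rewrite -negb_or -mulf_eq0 -coef0M.
have [g0 h0] : g != 0 /\ h != 0.
  by split; [apply: contraNneq g00 | apply: contraNneq h00] => ->; rewrite coef0.
set P := initial d g; set p := (size g).-1.
rewrite ltn_neqAle size_initial andbT; apply/eqP => sizeP.
have P00 : P`_0 = 0.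
  apply: (@monomial_factor_low _ P (initial d h) c j) => //.
    by rewrite -initialM.
  by rewrite sizeP ltn_predRL.
have Pp : P`_p != 0 by rewrite /p -sizeP -lead_coefE lead_coef_eq0 initial_eq0.
set S := sizeY (tilt d g).
have S_le : (S <= d.+1)%N.
  have : (S.-1 < size (lead_coef g))%N.
    apply: coef_neq0_size.
    by move: Pp; rewrite coef_lead_coefY coef_tilt subnn mul0n expr0 mulr1.
  move: deg_gh; rewrite /degv lead_coefM size_mul ?lead_coef_eq0 //.
  have := size_poly_gt0 (lead_coef h); rewrite lead_coef_eq0 h0.
  by move: (size (lead_coef g)) (size (lead_coef h)) => a b; rewrite -!subn1; lia.
have : (size ((tilt d g)`_0)%R <= S.-1)%N.
  apply/leq_sizeP => k; rewrite leq_eqVlt => /orP[/eqP <-|].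
    by move: P00; rewrite coef_lead_coefY.
  move=> /(leq_trans (leqSpred S))/(leq_trans (max_size_coefXY _ 0)).
  exact: nth_default.
rewrite coef_tilt subn0 size_mulXn //.
have := size_poly_gt0 g`_0; rewrite g00.
have : (0 < p)%N by rewrite ltn_predRL.
by move: (size g`_0) => a; nia.
Qed.

Lemma size_initial_prod d (gs : seq {poly {poly R}}) :
  (forall g, g \in gs -> g != 0 /\ (size (initial d g) < size g)%N) ->
  (size (initial d (\prod_(g <- gs) g)%R) + size gs
     <= size (\prod_(g <- gs) g)%R)%N.
Proof.
elim: gs => [|g gs IH] gs_lt.
  by rewrite big_nil /initial tilt1 lead_coefY1 !size_poly1.
have [g0 lt_g] := gs_lt g (mem_head _ _).
have {}gs_lt x : x \in gs -> x != 0 /\ (size (initial d x) < size x)%N.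
  by move=> x_gs; apply: gs_lt; rewrite inE x_gs orbT.
have {}IH := IH gs_lt.
rewrite big_cons; set G := \prod_(x <- gs) x in IH *.
have G0 : G != 0 by rewrite prodf_seq_neq0; apply/allP => x /gs_lt[].
rewrite initialM !size_mul ?initial_eq0 //= addnS.
have := size_poly_gt0 (initial d g); have := size_poly_gt0 (initial d G).
rewrite !initial_eq0 g0 G0; move: lt_g IH.
move: (size (initial d g)) (size (initial d G)) (size g) (size G) => a b c e.
by rewrite -!subn1; lia.
Qed.

Lemma size_factors_le d f c j (ps : seq {poly {poly R}}) :
  f`_0 != 0 -> degv (lead_coef f) = d -> c != 0 -> initial d f = c *: 'X^j ->
  (forall p, p \in ps -> (1 < size p)%N) -> f = \prod_(p <- ps) p ->
  (size ps <= (size f).-1 - j)%N.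
Proof.
move=> f00 deg_f c0 init_f ps_gt1 f_ps.
have size_init : size (initial d f) = j.+1.
  by rewrite init_f size_scale ?size_polyXn.
suff : (size (initial d f) + size ps <= size f)%N.
  by rewrite size_init -!subn1; lia.
rewrite f_ps; apply: size_initial_prod => g g_ps.
have f_gh : f = g * \prod_(p <- rem g ps) p by rewrite f_ps (big_rem _ g_ps).
have sg := ps_gt1 g g_ps; split; first by rewrite -size_poly_gt0 ltnW.
apply: (size_initial_factor_lt (h := \prod_(p <- rem g ps) p) (c := c) (j := j)).
all: by rewrite -?f_gh.
Qed.

End InitialForm.

Lemma irreducible_factorization (R : idomainType) (F : {poly R}) :
  (1 < size F)%N ->
  (forall c, (exists g, F = c%:P * g) -> c \is a GRing.unit) ->
  exists2 ps : seq {poly R},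
    forall p, p \in ps -> irreducible_elt p /\ (1 < size p)%N &
    F = \prod_(p <- ps) p.
Proof.
have [N] := ubnP (size F); elim: N F => // N IH F ltFN sF unitC.
have F0 : F != 0 by rewrite -size_poly_gt0 ltnW.
have nonconst q r : F = q * r -> ~~ (q \is a GRing.unit) -> (1 < size q)%N.
  move=> Fqr; rewrite ltnNge; apply: contra => sq.
  rewrite (size1_polyC sq) rmorph_unit // unitC //.
  by exists r; rewrite -(size1_polyC sq).
have [[q [r [Fqr qU rU]]] | irrF] := classic (exists q r,
    [/\ F = q * r, ~~ (q \is a GRing.unit) & ~~ (r \is a GRing.unit)]).
- have sq := nonconst q r Fqr qU.
  have sr := nonconst r q (etrans Fqr (mulrC q r)) rU.
  have sF_qr : size F = (size q + size r).-1.
    by rewrite Fqr size_mul // -size_poly_gt0 ltnW.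
  have [ps ps_irr q_ps] : exists2 ps : seq {poly R},
      forall p, p \in ps -> irreducible_elt p /\ (1 < size p)%N &
      q = \prod_(p <- ps) p.
    apply: IH => //; first by move: ltFN; rewrite sF_qr -!subn1; lia.
    by move=> c [g qg]; apply: unitC; exists (g * r); rewrite Fqr qg mulrA.
  have [qs qs_irr r_qs] : exists2 qs : seq {poly R},
      forall p, p \in qs -> irreducible_elt p /\ (1 < size p)%N &
      r = \prod_(p <- qs) p.
    apply: IH => //; first by move: ltFN; rewrite sF_qr -!subn1; lia.
    by move=> c [g rg]; apply: unitC; exists (g * q); rewrite Fqr mulrC rg mulrA.
  exists (ps ++ qs); last by rewrite big_cat -q_ps -r_qs.
  by move=> p; rewrite mem_cat => /orP[/ps_irr|/qs_irr].
- exists [:: F]; last by rewrite big_seq1.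
  move=> p; rewrite inE => /eqP ->; split => //; split => //.
    by rewrite poly_unitE gtn_eqF.
  move=> q r Fqr; have [qU|qU] := boolP (q \is a GRing.unit); first by left.
  have [rU|rU] := boolP (r \is a GRing.unit); first by right.
  by case: irrF; exists q, r.
Qed.

Lemma mconst_unit (K : fieldType) m (p : mpolyK K m) :
  mconst p -> p != 0 -> p \is a GRing.unit.
Proof.
elim: m p => [|m IH] p /=; first by rewrite unitfE.
move=> /andP[sp1 const_p0] p0; have p_C := size1_polyC sp1.
rewrite p_C rmorph_unit // IH //.
by apply: contraNneq p0 => p00; rewrite p_C p00.
Qed.
Theorem theorem10 (K : fieldType) (s : nat) (hs : (3 <= s)%N)
  (f : {poly {poly mpolyK K (s - 2)}}) (n : nat)
  (hn : n = (size f).-1) (hn2 : (2 <= n)%N)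
  (ha0n : f`_0 * f`_n != 0)
  (hprim : forall d : {poly mpolyK K (s - 2)},
      (exists g : {poly {poly mpolyK K (s - 2)}}, f = d%:P * g) ->
      @mconst K (s - 2).+1 d)
  (j : nat) (hj : (j <= n - 1)%N)
  (hdeg : f`_j != 0 /\
     forall i : nat, (i <= n)%N -> i != j -> f`_i != 0 ->
       (degv f`_i)%:Z + (j%:Z - i%:Z) * (degv f`_n)%:Z < (degv f`_j)%:Z) :
  (exists ps : seq {poly {poly mpolyK K (s - 2)}},
      [/\ (size ps <= n - j)%N, (forall p, p \in ps -> irreducible_elt p) & f = \prod_(p <- ps) p])
  /\ (j = (n - 1)%N -> irreducible_elt f).
Proof.
have f00 : f`_0 != 0 by move: ha0n; rewrite mulf_eq0 negb_or => /andP[].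
have f0 : f != 0 by apply: contraNneq f00 => ->; rewrite coef0.
have size_f : size f = n.+1 by rewrite hn prednK // size_poly_gt0.
have [fj0 dom] := hdeg.
have init_f : initial (degv (lead_coef f)) f = lead_coef f`_j *: 'X^j.
  by apply: initial_dominant => // i; rewrite lead_coefE -hn; exact: dom.
have unitC c : (exists g, f = c%:P * g) -> c \is a GRing.unit.
  move=> c_div; apply: mconst_unit (hprim c c_div) _; case: c_div => g f_cg.
  by apply: contraNneq f0 => c0; rewrite f_cg c0 polyC0 mul0r.
have sf : (1 < size f)%N by rewrite size_f ltnS ltnW.
have [ps ps_irr f_ps] := irreducible_factorization sf unitC.
have size_ps : (size ps <= n - j)%N.
  rewrite hn; apply: (size_factors_le f00 erefl _ init_f _ f_ps).
    by rewrite lead_coef_eq0.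
  by move=> p /ps_irr[].
split.
- by exists ps; split => // p /ps_irr[].
- move=> j_n1; move: size_ps; rewrite j_n1 subKn ?(ltnW hn2) //.
  case: ps ps_irr f_ps => [|p [|]] //= ps_irr; rewrite ?big_nil ?big_seq1.
    by move=> f1; move: size_f; rewrite f1 size_poly1; lia.
  by move=> ->; case: (ps_irr p (mem_head _ _)).
Qed.
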